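(* Let $(a_n)_{n\ge0}$ and $(b_n)_{n\ge0}$ be bounded sequences of nonnegative real numbers such that $\sum_n b_n=+\infty$ and $a_n=o(b_n)$, i.e. there is a sequence $c_n\to0$ with $a_n\le c_nb_n$ for all $n$. Then there exists an increasing function $\theta:\mathbb N\to\mathbb N$ such that $\sum_n a_{\theta(n)}<+\infty$ and $\sum_n b_{\theta(n)}=+\infty$. *)

From Stdlib Require Import Reals Lra Lia.
Open Scope R_scope.

Definition series_converges (u : nat -> R) : Prop :=
  exists l : R, Un_cv (fun N => sum_f_R0 u N) l.

Definition series_diverges_infty (u : nat -> R) : Prop :=
  cv_infty (fun N => sum_f_R0 u N).

(** The subsequence is built greedily: having chosen indices with partial sum
    [T] of [b], the next index [m] is the first one available if [|c m|] is
    small enough, and otherwise the first index far enough out that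
    [|c m| (1 + T) (1 + T + B) <= 1], where [B] bounds [b].  The second
    condition makes [a m] at most [1/(1 + T) - 1/(1 + T + b m)], so the
    [a]-series is dominated by a telescoping one.  If the [b]-series along the
    subsequence stayed bounded, the admissibility threshold would stabilise,
    hence from some point on the subsequence would take every index, and it
    would inherit the divergence of [sum b]. *)
From Stdlib Require Import Reals Lra Lia.
From Stdlib Require Import Classical ClassicalEpsilon.
Open Scope R_scope.

Lemma series_converges_telescoping (u v : nat -> R) :
  (forall n, 0 <= u n) -> (forall n, 0 <= v n) ->
  (forall n, u (S n) <= v n - v (S n)) -> series_converges u.
Proof.
  intros hu hv huv.
  assert (hbound : forall N, sum_f_R0 u N <= u O + v O - v N).
  { induction N as [|N IH]; simpl; [lra|specialize (huv N); lra]. }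
  destruct (growing_cv (fun N => sum_f_R0 u N)) as [l hl].
  - intro n; simpl; specialize (hu (S n)); lra.
  - exists (u O + v O); intros x [N ->]; specialize (hbound N); specialize (hv N); lra.
  - exists l; exact hl.
Qed.

Lemma cv_infty_growing_unbounded (u : nat -> R) :
  Un_growing u -> (forall M, exists n, M < u n) -> cv_infty u.
Proof.
  intros hgrow hunb M; destruct (hunb M) as [N hN]; exists N.
  intros n hn; pose proof (tech9 u hgrow N n hn); lra.
Qed.

Lemma series_diverges_infty_tail (u v : nat -> R) (N s : nat) :
  (forall n, 0 <= u n) -> (forall j, u (N + j)%nat = v (s + j)%nat) ->
  series_diverges_infty v -> series_diverges_infty u.
Proof.
  intros hu huv hv M.
  assert (hpos : forall n, 0 <= sum_f_R0 u n).
  { induction n as [|n IH]; simpl; [apply hu|specialize (hu (S n)); lra]. }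
  assert (htail : forall j, sum_f_R0 u (N + j) - sum_f_R0 u N
                            = sum_f_R0 v (s + j) - sum_f_R0 v s).
  { induction j as [|j IH]; rewrite ?Nat.add_0_r; [lra|].
    rewrite !Nat.add_succ_r; simpl; rewrite <- !Nat.add_succ_r, huv; lra. }
  destruct (hv (M + sum_f_R0 v s)) as [K hK].
  exists (N + K)%nat; intros n hn.
  replace n with (N + (n - N))%nat by lia.
  specialize (htail (n - N)%nat); specialize (hK (s + (n - N))%nat ltac:(lia)).
  specialize (hpos N); lra.
Qed.

Lemma strictly_increasing_nat (f : nat -> nat) :
  (forall n, (f n < f (S n))%nat) -> forall n m, (n < m)%nat -> (f n < f m)%nat.
Proof.
  intros hf n m hnm; induction hnm as [|m _ IH]; [apply hf|specialize (hf m); lia].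
Qed.

Definition weight (B T : R) : R := (1 + T) * (1 + T + B).

Lemma weight_le (B T U : R) : 0 <= B -> 0 <= T -> T <= U -> weight B T <= weight B U.
Proof. intros; unfold weight; apply Rmult_le_compat; lra. Qed.

(* [1/(1+T) - 1/(1+T+v) = v/((1+T)(1+T+v))], and [v <= B]. *)
Lemma le_inv_sub_inv (x u v T B : R) :
  0 <= T -> 0 <= v <= B -> 0 <= x -> x * weight B T <= 1 -> u <= x * v ->
  u <= / (1 + T) - / (1 + (T + v)).
Proof.
  unfold weight; intros hT hv hx hsmall huv.
  replace (/ (1 + T) - / (1 + (T + v))) with (v * / ((1 + T) * (1 + T + v)))
    by (field; lra).
  assert (hw : 0 < (1 + T) * (1 + T + v)) by (apply Rmult_lt_0_compat; lra).
  assert (hx_le : x <= / ((1 + T) * (1 + T + v))).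
  { apply (Rmult_le_reg_r ((1 + T) * (1 + T + v))); [exact hw|].
    rewrite Rinv_l by lra.
    enough (x * ((1 + T) * (1 + T + v)) <= x * ((1 + T) * (1 + T + B))) by lra.
    apply Rmult_le_compat_l; [lra|apply Rmult_le_compat_l; lra]. }
  rewrite Rmult_comm; apply (Rle_trans _ (x * v)); [exact huv|].
  apply Rmult_le_compat_r; lra.
Qed.

Section Greedy.

Variables (b c : nat -> R) (B : R).
Hypothesis hb_nonneg : forall n, 0 <= b n.
Hypothesis hc : Un_cv c 0.

Definition small_at (T : R) (m : nat) : Prop := Rabs (c m) * weight B T <= 1.

Lemma small_at_eventually (T : R) : exists N, forall m, (N <= m)%nat -> small_at T m.
Proof.
  unfold small_at.
  destruct (Rle_lt_dec (weight B T) 0) as [hw|hw].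
  { exists O; intros m _; pose proof (Rabs_pos (c m)); nra. }
  destruct (hc (/ weight B T)) as [N hN]; [apply Rinv_0_lt_compat, hw|].
  exists N; intros m hm; specialize (hN m hm).
  unfold R_dist in hN; rewrite Rminus_0_r in hN.
  apply (Rmult_lt_compat_r (weight B T)) in hN; [|exact hw].
  rewrite Rinv_l in hN; lra.
Qed.

Lemma exists_next (k : nat) (T : R) :
  exists m, (k < m)%nat /\ small_at T m /\ (small_at T (S k) -> m = S k).
Proof.
  destruct (classic (small_at T (S k))) as [hk|hk].
  - exists (S k); auto.
  - destruct (small_at_eventually T) as [N hN].
    exists (S (Nat.max N k)); repeat split; [lia|apply hN; lia|contradiction].
Qed.

Definition next (k : nat) (T : R) : nat :=
  proj1_sig (constructive_indefinite_description _ (exists_next k T)).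

Lemma next_spec (k : nat) (T : R) :
  (k < next k T)%nat /\ small_at T (next k T) /\
  (small_at T (S k) -> next k T = S k).
Proof. exact (proj2_sig (constructive_indefinite_description _ (exists_next k T))). Qed.

Fixpoint greedy (n : nat) : nat * R :=
  match n with
  | O => (O, b O)
  | S k => let p := greedy k in
           (next (fst p) (snd p), snd p + b (next (fst p) (snd p)))
  end.

Definition theta (n : nat) : nat := fst (greedy n).
Definition total (n : nat) : R := snd (greedy n).

Lemma theta_S (n : nat) : theta (S n) = next (theta n) (total n).
Proof. reflexivity. Qed.

Lemma total_S (n : nat) : total (S n) = total n + b (theta (S n)).
Proof. reflexivity. Qed.

Lemma total_sum (n : nat) : total n = sum_f_R0 (fun k => b (theta k)) n.
Proof. induction n as [|n IH]; [reflexivity|rewrite total_S, IH; reflexivity]. Qed.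

Lemma total_nonneg (n : nat) : 0 <= total n.
Proof.
  induction n as [|n IH]; [apply hb_nonneg|].
  rewrite total_S; specialize (hb_nonneg (theta (S n))); lra.
Qed.

Lemma theta_lt_S (n : nat) : (theta n < theta (S n))%nat.
Proof. rewrite theta_S; apply next_spec. Qed.

Lemma theta_ge (n : nat) : (n <= theta n)%nat.
Proof. induction n as [|n IH]; [lia|pose proof (theta_lt_S n); lia]. Qed.

Lemma small_at_theta_S (n : nat) : small_at (total n) (theta (S n)).
Proof. rewrite theta_S; apply next_spec. Qed.

Lemma theta_S_consecutive (n : nat) :
  small_at (total n) (S (theta n)) -> theta (S n) = S (theta n).
Proof. rewrite theta_S; apply next_spec. Qed.

Hypothesis hB : 0 <= B.

Lemma greedy_consecutive_if_bounded (M : R) : (forall n, total n <= M) ->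
  exists N, forall j, theta (N + j) = (theta N + j)%nat.
Proof.
  intros hM; destruct (small_at_eventually M) as [N hN]; exists N.
  induction j as [|j IH]; [rewrite !Nat.add_0_r; reflexivity|].
  rewrite Nat.add_succ_r, theta_S_consecutive, IH; [lia|].
  assert (hsmall : small_at M (S (theta (N + j)))).
  { apply hN; pose proof (theta_ge (N + j)); lia. }
  unfold small_at in *.
  pose proof (Rabs_pos (c (S (theta (N + j))))).
  pose proof (weight_le B _ _ hB (total_nonneg (N + j)) (hM (N + j)%nat)).
  eapply Rle_trans; [|exact hsmall]; apply Rmult_le_compat_l; lra.
Qed.

Hypothesis hb_div : series_diverges_infty b.

Lemma greedy_diverges : series_diverges_infty (fun n => b (theta n)).
Proof.
  apply cv_infty_growing_unbounded.
  - intro n; simpl; specialize (hb_nonneg (theta (S n))); lra.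
  - intro M; apply NNPP; intro hbounded.
    assert (hM : forall n, total n <= M).
    { intro n; apply Rnot_lt_le; intro hn; apply hbounded; exists n;
        rewrite <- total_sum; exact hn. }
    destruct (greedy_consecutive_if_bounded M hM) as [N hN].
    destruct (series_diverges_infty_tail (fun n => b (theta n)) b N (theta N)
                (fun n => hb_nonneg (theta n)) (fun j => f_equal b (hN j)) hb_div M)
      as [K hK].
    specialize (hK K (le_n K)); simpl in hK; rewrite <- total_sum in hK.
    specialize (hM K); lra.
Qed.

Variable a : nat -> R.
Hypothesis ha_nonneg : forall n, 0 <= a n.
Hypothesis hac : forall n, a n <= c n * b n.
Hypothesis hb_le : forall n, b n <= B.

Lemma greedy_converges : series_converges (fun n => a (theta n)).
Proof.
  apply (series_converges_telescoping _ (fun n => / (1 + total n))).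
  - intro n; apply ha_nonneg.
  - intro n; pose proof (total_nonneg n); left; apply Rinv_0_lt_compat; lra.
  - intro n; simpl; rewrite total_S.
    apply (le_inv_sub_inv (Rabs (c (theta (S n)))) _ _ _ B); auto using total_nonneg, Rabs_pos.
    + apply small_at_theta_S.
    + eapply Rle_trans; [apply hac|].
      apply Rmult_le_compat_r; [apply hb_nonneg|apply Rle_abs].
Qed.

End Greedy.

Theorem lemma13 (a b : nat -> R)
  (ha_nonneg : forall n, 0 <= a n) (hb_nonneg : forall n, 0 <= b n)
  (ha_bdd : exists M, forall n, a n <= M) (hb_bdd : exists M, forall n, b n <= M)
  (hb_div : series_diverges_infty b)
  (ho : exists c : nat -> R, Un_cv c 0 /\ forall n, a n <= c n * b n) :
  exists theta : nat -> nat,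
    (forall n m, (n < m)%nat -> (theta n < theta m)%nat) /\
    series_converges (fun n => a (theta n)) /\
    series_diverges_infty (fun n => b (theta n)).
Proof.
  destruct hb_bdd as [B hb_le]; destruct ho as [c [hc hac]].
  assert (hB : 0 <= B) by (specialize (hb_le O); specialize (hb_nonneg O); lra).
  exists (theta b c B hc); repeat split.
  - exact (strictly_increasing_nat _ (theta_lt_S b c B hc)).
  - exact (greedy_converges b c B hb_nonneg hc a ha_nonneg hac hb_le).
  - exact (greedy_diverges b c B hb_nonneg hc hB hb_div).
Qed.
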